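(* Let $n\in\mathbb{N}$ and let $\mathcal{A}_n$ be a Sperner family of subsets of $[1,n]_{\mathbb{Z}}$. For $0\le k\le n$ let $a_k=|\{A\in\mathcal{A}_n: |A|=k\}|$. Then $$\sum_{k=0}^n\frac{a_k}{\binom{n}{k}}\le 4.$$
   Context: $[1,n]_{\mathbb{Z}}=\{1,\dots,n\}$. A collection $\mathcal{A}_n$ of subsets of $[1,n]_{\mathbb{Z}}$ is called a Sperner family if for each $A\in\mathcal{A}_n$ at least one of the following holds: (1) there exists $B_A\subset[1,n]_{\mathbb{Z}}\setminus A$ with $|B_A|\ge n/2$ such that every $A'\supset A$ with $A'\cap B_A\neq\emptyset$ satisfies $A'\notin\mathcal{A}_n$; (2) there exists $B'_A\subset A$ with $|B'_A|\ge n/2$ such that every $A'\subset A$ with $B'_A\setminus A'\ne\emptyset$ satisfies $A'\notin\mathcal{A}_n$. *)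

From mathcomp Require Import all_boot all_order all_algebra.
Set Implicit Arguments. Unset Strict Implicit. Unset Printing Implicit Defensive.
Import Order.TTheory GRing.Theory Num.Theory.

(* Ground set [1,n] is modelled by 'I_n (= {0,...,n-1}); |B| >= n/2 is 2*|B| >= n. *)
Definition sperner_family (n : nat) (F : {set {set 'I_n}}) : Prop :=
  forall A, A \in F ->
    (exists B : {set 'I_n}, [/\ B \subset ~: A, n <= 2 * #|B| &
        forall A' : {set 'I_n}, A \subset A' -> A' :&: B != set0 -> A' \notin F])
    \/
    (exists B' : {set 'I_n}, [/\ B' \subset A, n <= 2 * #|B'| &
        forall A' : {set 'I_n}, A' \subset A -> B' :\: A' != set0 -> A' \notin F]).

Definition level_count (n : nat) (F : {set {set 'I_n}}) (k : nat) : nat :=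
  #|[set A in F | #|A| == k]|.

From mathcomp Require Import all_boot all_order all_algebra.
From mathcomp Require Import fingroup perm zify.
Set Implicit Arguments. Unset Strict Implicit. Unset Printing Implicit Defensive.
Import GRing.Theory Num.Theory.

(* A permutation s of 'I_n is read as the maximal chain of the sets
   s @: [0, k).  A k-set lies on n!/C(n, k) of these chains, so the sum to
   bound is (1/n!) sum_{A in F} #(chains through A).  Call a chain through A
   extreme for A if A is the largest or the smallest member of F on it; a chain
   is extreme for at most two members of F.  The Sperner condition makes at
   least half of the chains through A extreme: in case (1), among the chains
   through A the element added right after A is uniformly distributed over the
   complement of A, so it falls in B with probability >= (n/2)/n, and then no
   larger member of F lies on the chain; case (2) is symmetric, with the last
   element added before reaching A.  Hence the sum is at most 2 * 2. *)

Lemma card_setId_fibers (I J : finType) (S : {set I}) (f : I -> J) (X : {set J}) :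
  #|[set s in S | f s \in X]| = \sum_(b in X) #|[set s in S | f s == b]|.
Proof.
rewrite -sum1_card (partition_big f (mem X)) => [|s]; last by rewrite inE => /andP[].
apply: eq_bigr => b; rewrite inE => bX; rewrite -sum1_card; apply: eq_bigl => s.
by rewrite !inE; case: eqP => [->|]; rewrite ?bX ?andbT ?andbF.
Qed.

Lemma double_count (I J : finType) (P : {pred I}) (R : I -> J -> bool) :
  \sum_(i in P) #|[set j | R i j]| = \sum_j #|[set i in P | R i j]|.
Proof.
under eq_bigr do rewrite -sum1_card.
under [RHS]eq_bigr do rewrite -sum1_card.
rewrite (exchange_big_dep xpredT) //=; apply: eq_bigr => j _.
by apply: eq_bigl => i; rewrite !inE.
Qed.

Section Permutations.

Variable T : finType.

Lemma imset_permM (s g : {perm T}) (A : {set T}) : (s * g)%g @: A = g @: (s @: A).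
Proof. by rewrite -imset_comp; apply: eq_imset => x; rewrite permM. Qed.

Lemma imset_tperm_id (A : {set T}) b b' :
  (b \in A) = (b' \in A) -> tperm b b' @: A = A.
Proof.
move=> bA; apply/eqP; rewrite eqEcard card_imset ?leqnn ?andbT; last exact: perm_inj.
apply/subsetP => _ /imsetP[x xA ->]; case: tpermP => [xb|xb'|_ _ //].
  by rewrite -bA -xb.
by rewrite bA -xb'.
Qed.

Lemma perm_imset_transitive (A A' : {set T}) :
  #|A| = #|A'| -> exists g : {perm T}, g @: A = A'.
Proof.
move=> cardAA'; have [k cardA] : exists k, #|A| = k by exists #|A|.
elim: k A A' cardA cardAA' => [|k IH] A A' cardA; rewrite cardA => cardA'.
  by exists 1%g; rewrite (cards0_eq cardA) (cards0_eq (esym cardA')) imset0.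
have [a aA] : exists a, a \in A by apply/set0Pn; rewrite -card_gt0 cardA.
have [a' a'A'] : exists a', a' \in A' by apply/set0Pn; rewrite -card_gt0 -cardA'.
have [g gA] : exists g : {perm T}, g @: (A :\ a) = A' :\ a'.
  by apply: IH; move: (cardsD1 a A) (cardsD1 a' A'); rewrite aA a'A'; lia.
exists (g * tperm (g a) a')%g.
rewrite -[A](setD1K aA) -[A'](setD1K a'A') imsetU1 permM tpermL imset_permM gA.
congr (_ |: _); rewrite -[RHS]imset_id; apply: eq_in_imset => y yA'.
have ga_y : g a != y.
  by apply: contraTneq yA' => <-; rewrite -gA mem_imset ?inE ?eqxx //; apply: perm_inj.
by rewrite tpermD // eq_sym; move: yA'; rewrite !inE => /andP[].
Qed.

Lemma card_le_rcoset (X Y : {set {perm T}}) (g : {perm T}) :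
  (forall s, s \in X -> (s * g)%g \in Y) -> #|X| <= #|Y|.
Proof.
move=> XgY; rewrite -(card_rcoset X g); apply: subset_leq_card.
by apply/subsetP => _ /rcosetP[s sX ->]; apply: XgY.
Qed.

Section Equidistribution.

Variables (S : {set {perm T}}) (i0 : T) (D : {set T}).
Hypothesis S_i0 : forall s, s \in S -> s i0 \in D.
Hypothesis S_tperm :
  forall s b b', s \in S -> b \in D -> b' \in D -> (s * tperm b b')%g \in S.

Let fiber b := [set s in S | s i0 == b].

Lemma card_fiber_le b b' : b \in D -> b' \in D -> #|fiber b| <= #|fiber b'|.
Proof.
move=> bD b'D; apply: (card_le_rcoset (g := tperm b b')) => s.
by rewrite !inE permM => /andP[sS /eqP->]; rewrite S_tperm // tpermL eqxx.
Qed.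

Lemma card_equidistributed (X : {set T}) :
  X \subset D -> #|[set s in S | s i0 \in X]| * #|D| = #|X| * #|S|.
Proof.
move=> XD; have [D0 | [d dD]] := set_0Vmem D.
  have -> : X = set0 by apply/eqP; rewrite -subset0 -D0.
  by rewrite D0 !cards0 !muln0.
have fiberE b : b \in D -> #|fiber b| = #|fiber d|.
  by move=> bD; apply/eqP; rewrite eqn_leq !card_fiber_le.
have -> : #|S| = #|[set s in S | s i0 \in D]|.
  by apply: eq_card => s; rewrite inE; case sS: (s \in S); rewrite ?(S_i0 sS).
rewrite !card_setId_fibers.
rewrite (eq_bigr _ fiberE) (eq_bigr _ (fun b bX => fiberE b (subsetP XD b bX))).
by rewrite !sum_nat_const mulnAC mulnA.
Qed.

Lemma card_equidistributed_half (X : {set T}) : X \subset D -> #|D| <= 2 * #|X| ->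
  #|S| <= 2 * #|[set s in S | s i0 \in X]|.
Proof.
move=> XD DX; have [D0 | D_gt0] := posnP #|D|.
  suff -> : S = set0 by rewrite cards0.
  apply/setP => s; rewrite inE; apply/negbTE/negP => /S_i0.
  by rewrite (cards0_eq D0) inE.
rewrite -(leq_pmul2r D_gt0) -mulnA card_equidistributed // mulnA.
by rewrite [_ * #|S|]mulnC leq_mul2l DX orbT.
Qed.

End Equidistribution.

End Permutations.

Section MaximalChains.

Variable n : nat.
Implicit Types (s g : {perm 'I_n}) (A B : {set 'I_n}) (F : {set {set 'I_n}}).

Lemma card_le_n A : #|A| <= n.
Proof. by rewrite -[X in _ <= X]card_ord max_card. Qed.

Definition chain_set s k : {set 'I_n} := s @: [set i : 'I_n | i < k].

Lemma mem_chain_set s k i : (s i \in chain_set s k) = (i < k).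
Proof. by rewrite mem_imset ?inE //; apply: perm_inj. Qed.

Lemma card_chain_set s k : k <= n -> #|chain_set s k| = k.
Proof.
move=> kn; rewrite card_imset; last exact: perm_inj.
have -> : [set i : 'I_n | i < k] = [set widen_ord kn j | j : 'I_k].
  apply/setP => i; rewrite inE.
  apply/idP/imsetP => [ik | [j _ ->]]; last exact: (ltn_ord j).
  by exists (Ordinal ik); last apply: val_inj.
by rewrite card_imset ?card_ord // => i j /(congr1 val) eqij; apply: val_inj.
Qed.

Lemma chain_set_mono s j k : j <= k -> chain_set s j \subset chain_set s k.
Proof.
move=> jk; apply: imsetS; apply/subsetP => i; rewrite !inE => ij.
exact: leq_trans ij jk.
Qed.

Lemma chain_setM s g k : chain_set (s * g)%g k = g @: chain_set s k.
Proof. exact: imset_permM. Qed.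

Definition chain_perms A := [set s | chain_set s #|A| == A].

Lemma card_chain_perms_eq A A' : #|A| = #|A'| -> #|chain_perms A| = #|chain_perms A'|.
Proof.
wlog suff : A A' / #|A| = #|A'| -> #|chain_perms A| <= #|chain_perms A'|.
  by move=> le_AA' AA'; apply/eqP; rewrite eqn_leq !le_AA'.
move=> AA'; have [g gA] := perm_imset_transitive AA'.
apply: (card_le_rcoset (g := g)) => s; rewrite !inE chain_setM -AA' => /eqP->.
by rewrite gA.
Qed.

Lemma card_chain_perms A : #|chain_perms A| * 'C(n, #|A|) = n`!.
Proof.
set k := #|A|; set draws := [set B : {set 'I_n} | #|B| == k].
have := card_setId_fibers [set: {perm 'I_n}] (chain_set ^~ k) draws.
have -> : [set s in [set: {perm 'I_n}] | chain_set s k \in draws] = setT.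
  by apply/setP => s; rewrite !inE card_chain_set ?card_le_n ?eqxx.
rewrite -card_Sn -cardsT => ->.
rewrite mulnC -[n in 'C(n, _)]card_ord -card_draws -sum_nat_const.
apply: eq_bigr => B; rewrite inE => /eqP Bk; rewrite -(card_chain_perms_eq Bk).
by apply: eq_card => s; rewrite !inE Bk.
Qed.

Definition chain_top F s A := (chain_set s #|A| == A) &&
  [forall j : 'I_n.+1, (#|A| < j) ==> (chain_set s j \notin F)].

Definition chain_bottom F s A := (chain_set s #|A| == A) &&
  [forall j : 'I_n.+1, (j < #|A|) ==> (chain_set s j \notin F)].

Definition chain_extreme_perms F A := [set s | chain_top F s A || chain_bottom F s A].

Lemma chain_set_notin F s (P : pred nat) A :
  [forall j : 'I_n.+1, P j ==> (chain_set s j \notin F)] ->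
  A \in F -> chain_set s #|A| = A -> ~~ P #|A|.
Proof.
move=> /forallP /(_ (inord #|A|)); rewrite inordK ?ltnS ?card_le_n // => PF AF sA.
by apply: contraL AF => /(implyP PF); rewrite sA.
Qed.

Lemma card_chain_top_le1 F s : #|[set A in F | chain_top F s A]| <= 1.
Proof.
apply/card_le1_eqP => A1 A2; rewrite !inE.
move=> /andP[A1F /andP[/eqP sA1 top1]] /andP[A2F /andP[/eqP sA2 top2]].
have := chain_set_notin top1 A2F sA2; have := chain_set_notin top2 A1F sA1.
rewrite -!leqNgt => le21 le12.
by rewrite -sA1 -sA2 (@anti_leq #|A2| #|A1|) ?le12 ?le21.
Qed.

Lemma card_chain_bottom_le1 F s : #|[set A in F | chain_bottom F s A]| <= 1.
Proof.
apply/card_le1_eqP => A1 A2; rewrite !inE.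
move=> /andP[A1F /andP[/eqP sA1 bot1]] /andP[A2F /andP[/eqP sA2 bot2]].
have := chain_set_notin (P := ltn^~ #|A1|) bot1 A2F sA2.
have := chain_set_notin (P := ltn^~ #|A2|) bot2 A1F sA1.
rewrite -!leqNgt => le12 le21.
by rewrite -sA1 -sA2 (@anti_leq #|A2| #|A1|) ?le12 ?le21.
Qed.

Lemma card_chain_extreme_le2 F s :
  #|[set A in F | chain_top F s A || chain_bottom F s A]| <= 2.
Proof.
apply: leq_trans (leq_add (card_chain_top_le1 F s) (card_chain_bottom_le1 F s)).
apply: leq_trans (leq_card_setU _ _); apply: subset_leq_card.
by apply/subsetP => A; rewrite !inE => /andP[-> /orP[] ->]; rewrite ?orbT.
Qed.

Lemma sum_card_chain_extreme_perms F :
  \sum_(A in F) #|chain_extreme_perms F A| <= 2 * n`!.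
Proof.
rewrite double_count -card_Sn mulnC -sum_nat_const.
by apply: leq_sum => s _; apply: card_chain_extreme_le2.
Qed.

Lemma card_chain_perms_le_top F A B :
  B \subset ~: A -> n <= 2 * #|B| ->
  (forall A', A \subset A' -> A' :&: B != set0 -> A' \notin F) ->
  #|chain_perms A| <= 2 * #|[set s | chain_top F s A]|.
Proof.
move=> BA nB BF; have [A_lt_n | n_le_A] := ltnP #|A| n; last first.
  rewrite -[#|chain_perms A|]mul1n leq_mul //; apply/subset_leq_card/subsetP => s.
  rewrite !inE /chain_top => -> /=; apply/forallP => j; apply/implyP => Aj.
  by move: (ltn_ord j); rewrite ltnS leqNgt (leq_ltn_trans n_le_A Aj).
(* [s i0] is the element added right after [A] along the chain of [s]. *)
pose i0 := Ordinal A_lt_n.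
have chain_i0 s : s \in chain_perms A -> s i0 \in ~: A.
  by rewrite inE => /eqP sA; rewrite -sA inE mem_chain_set ltnn.
have chain_tperm s b b' : s \in chain_perms A -> b \in ~: A -> b' \in ~: A ->
    (s * tperm b b')%g \in chain_perms A.
  rewrite !inE chain_setM => /eqP-> bA b'A.
  by rewrite imset_tperm_id // (negbTE bA) (negbTE b'A).
apply: leq_trans (card_equidistributed_half chain_i0 chain_tperm BA _) _.
  by apply: leq_trans nB; apply: card_le_n.
rewrite leq_mul2l subset_leq_card ?orbT //; apply/subsetP => s.
rewrite !inE => /andP[/eqP sA sB]; rewrite /chain_top sA eqxx /=.
apply/forallP => j; apply/implyP => Aj; apply: BF.
  by rewrite -sA; apply/chain_set_mono/ltnW.
by apply/set0Pn; exists (s i0); rewrite inE mem_chain_set Aj sB.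
Qed.

Lemma card_chain_perms_le_bottom F A B :
  B \subset A -> n <= 2 * #|B| ->
  (forall A', A' \subset A -> B :\: A' != set0 -> A' \notin F) ->
  #|chain_perms A| <= 2 * #|[set s | chain_bottom F s A]|.
Proof.
move=> BA nB BF; have [A0 | A_gt0] := posnP #|A|.
  rewrite -[#|chain_perms A|]mul1n leq_mul //; apply/subset_leq_card/subsetP => s.
  by rewrite !inE /chain_bottom A0 => -> /=; apply/forallP.
have A_pred_lt_n : #|A|.-1 < n by rewrite prednK // card_le_n.
(* [s i0] is the last element added before the chain of [s] reaches [A]. *)
pose i0 := Ordinal A_pred_lt_n.
have chain_i0 s : s \in chain_perms A -> s i0 \in A.
  by rewrite inE => /eqP sA; rewrite -sA mem_chain_set ltn_predL.
have chain_tperm s b b' : s \in chain_perms A -> b \in A -> b' \in A ->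
    (s * tperm b b')%g \in chain_perms A.
  by rewrite !inE chain_setM => /eqP-> bA b'A; rewrite imset_tperm_id // bA b'A.
apply: leq_trans (card_equidistributed_half chain_i0 chain_tperm BA _) _.
  by apply: leq_trans nB; apply: card_le_n.
rewrite leq_mul2l subset_leq_card ?orbT //; apply/subsetP => s.
rewrite !inE => /andP[/eqP sA sB]; rewrite /chain_bottom sA eqxx /=.
apply/forallP => j; apply/implyP => jA; apply: BF.
  by rewrite -sA; apply/chain_set_mono/ltnW.
apply/set0Pn; exists (s i0); rewrite inE mem_chain_set sB andbT -leqNgt.
by rewrite -ltnS prednK.
Qed.

Lemma card_chain_perms_le_extreme F A : sperner_family F -> A \in F ->
  #|chain_perms A| <= 2 * #|chain_extreme_perms F A|.
Proof.
move=> spF AF; have [[B [BA nB BF]] | [B [BA nB BF]]] := spF A AF.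
- apply: leq_trans (card_chain_perms_le_top BA nB BF) _.
  by rewrite leq_mul2l subset_leq_card ?orbT //; apply/subsetP => s; rewrite !inE => ->.
- apply: leq_trans (card_chain_perms_le_bottom BA nB BF) _.
  rewrite leq_mul2l subset_leq_card ?orbT //; apply/subsetP => s.
  by rewrite !inE => ->; rewrite orbT.
Qed.

Lemma sum_card_chain_perms_le F : sperner_family F ->
  \sum_(A in F) #|chain_perms A| <= 4 * n`!.
Proof.
move=> spF; apply: (@leq_trans (\sum_(A in F) 2 * #|chain_extreme_perms F A|)).
  by apply: leq_sum => A; apply: card_chain_perms_le_extreme.
by rewrite -big_distrr -[4]/(2 * 2) -mulnA leq_mul2l sum_card_chain_extreme_perms.
Qed.

End MaximalChains.

Local Open Scope ring_scope.

Lemma sum_level_count (R : pzSemiRingType) n (F : {set {set 'I_n}}) (f : nat -> R) :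
  \sum_(k < n.+1) (level_count F k)%:R * f k = \sum_(A in F) f #|A|.
Proof.
rewrite (partition_big (fun A : {set 'I_n} => inord #|A| : 'I_n.+1) xpredT) //=.
apply: eq_bigr => k _; rewrite mulr_natl -sumr_const.
apply: eq_big => [A | A]; rewrite inE.
  by rewrite -val_eqE /= inordK // ltnS card_le_n.
by move=> /andP[_ /eqP <-].
Qed.

Lemma sum_inv_binomial_le (R : numFieldType) n (F : {set {set 'I_n}}) :
  sperner_family F -> \sum_(A in F) ('C(n, #|A|)%:R : R)^-1 <= 4.
Proof.
move=> spF; have n_fact_gt0 : 0 < n`!%:R :> R by rewrite ltr0n fact_gt0.
rewrite -(ler_pM2r n_fact_gt0) mulr_suml (eq_bigr (fun A => #|chain_perms A|%:R)).
  by rewrite -natr_sum -natrM ler_nat; apply: sum_card_chain_perms_le.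
move=> A _; rewrite -(card_chain_perms A) natrM mulrCA mulVf ?mulr1 //.
by rewrite pnatr_eq0 -lt0n bin_gt0 card_le_n.
Qed.

Theorem lemma2p3 (n : nat) (F : {set {set 'I_n}}) :
  sperner_family F ->
  \sum_(k < n.+1) (level_count F k)%:R / ('C(n, k))%:R <= (4 : rat).
Proof.
move=> spF; rewrite (sum_level_count F (fun k => ('C(n, k)%:R)^-1)).
exact: sum_inv_binomial_le.
Qed.
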